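(* Let $n\ge 2$, let $(x_1,\dots,x_{n+1})$ be the standard coordinates on $\mathbb{R}^{n+1}$, and let $(y_1,\dots,y_{n+1})$ be another global coordinate system on $\mathbb{R}^{n+1}$ such that the coordinate transformation $(x_1,\dots,x_{n+1})\mapsto(y_1,\dots,y_{n+1})$ is a $C^2$ diffeomorphism of $\mathbb{R}^{n+1}$. Suppose that for every $C^2$ function $\varphi$ on $\mathbb{R}^{n+1}$, $\varphi$ satisfies $\sum_{i=1}^n \frac{\partial^2 \varphi}{\partial x_i^2} - \frac{\partial^2 \varphi}{\partial x_{n+1}^2} = 0$ everywhere if and only if $\varphi$ (expressed in the $y$-coordinates) satisfies $\sum_{i=1}^n \frac{\partial^2 \varphi}{\partial y_i^2} - \frac{\partial^2 \varphi}{\partial y_{n+1}^2} = 0$ everywhere. Then the coordinate transformation $(x_1,\dots,x_{n+1})\mapsto(y_1,\dots,y_{n+1})$ is $C^\infty$. *)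

From Stdlib Require Import Reals Lra.
From Stdlib Require Vectors.Fin.
Open Scope R_scope.

Definition pt (N : nat) := Fin.t N -> R.

Definition upd {N} (x : pt N) (i : Fin.t N) (t : R) : pt N :=
  fun j => if Fin.eq_dec i j then t else x j.

Definition cont {N} (f : pt N -> R) : Prop :=
  forall x eps, 0 < eps -> exists delta, 0 < delta /\
    forall y, (forall i, Rabs (y i - x i) < delta) -> Rabs (f y - f x) < eps.

Fixpoint Ck {N} (k : nat) (f : pt N -> R) : Prop :=
  cont f /\
  match k with
  | O => True
  | S k' => exists D : Fin.t N -> pt N -> R,
      (forall i x, derivable_pt_lim (fun t => f (upd x i t)) (x i) (D i x)) /\
      (forall i, Ck k' (D i))
  end.

Definition Ck_map {N} (k : nat) (F : pt N -> pt N) : Prop :=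
  forall j, Ck k (fun x => F x j).

Definition smooth_map {N} (F : pt N -> pt N) : Prop :=
  forall k, Ck_map k F.

Definition C2_diffeo {N} (F G : pt N -> pt N) : Prop :=
  (forall x, G (F x) = x) /\ (forall y, F (G y) = y) /\
  Ck_map 2 F /\ Ck_map 2 G.

Definition is_d2 {N} (f : pt N -> R) (i : Fin.t N) (x : pt N) (v : R) : Prop :=
  exists D : pt N -> R,
    (forall y, derivable_pt_lim (fun t => f (upd y i t)) (y i) (D y)) /\
    derivable_pt_lim (fun t => D (upd x i t)) (x i) v.

Fixpoint finsum (n : nat) : (Fin.t n -> R) -> R :=
  match n with
  | O => fun _ => 0
  | S m => fun g => g Fin.F1 + finsum m (fun j => g (Fin.FS j))
  end.

(* Coordinates of R^(n+1): spatial x_1..x_n are Fin.L 1 j, time x_(n+1) is last. *)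
Definition spc {n} (j : Fin.t n) : Fin.t (n + 1) := Fin.L 1 j.
Definition tim (n : nat) : Fin.t (n + 1) := Fin.R n Fin.F1.

Definition wave_at {n} (f : pt (n + 1) -> R) (x : pt (n + 1)) : Prop :=
  exists v : Fin.t (n + 1) -> R,
    (forall i, is_d2 f i x (v i)) /\
    finsum n (fun j => v (spc j)) - v (tim n) = 0.

From Stdlib Require Import Reals Lra Lia.
From Stdlib Require Vectors.Fin.
From Stdlib Require Import FunctionalExtensionality IndefiniteDescription List.
Open Scope R_scope.

(* Write eta = (1,...,1,-1) for the Minkowski signature and let
   J(x) = DF(x), H(x) = D^2 F(x).  Since every polynomial P in the
   y-coordinates with vanishing wave operator yields a solution P o F of the
   wave equation in the x-coordinates, testing the hypothesis on the
   polynomials y_a, y_a y_b (a <> b) and y_a^2 + eta_a y_(n+1)^2 shows that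
   (1) each component F^a solves the wave equation, and
   (2) J is conformal: sum_i eta_i J_ai J_bi = mu eta_a delta_ab.
   By the chain rule DG(F x) is a two-sided inverse of J, so also
   sum_a eta_a J_ai J_aj = mu eta_j delta_ij.  Differentiating this identity
   and using (1) and the symmetry of second derivatives (Schwarz), a purely
   algebraic argument -- valid because the dimension n+1 is at least 3 --
   shows that the "Christoffel symbols" sum_a eta_a H_aik J_aj vanish, hence
   H = 0: F is affine, in particular smooth. *)

Lemma upd_same {N} (x : pt N) i : upd x i (x i) = x.
Proof.
  apply functional_extensionality; intro j; unfold upd.
  destruct (Fin.eq_dec i j); subst; auto.
Qed.

Lemma upd_upd {N} (x : pt N) i a b : upd (upd x i a) i b = upd x i b.
Proof.
  apply functional_extensionality; intro j; unfold upd.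
  destruct (Fin.eq_dec i j); auto.
Qed.

Lemma upd_eq {N} (x : pt N) i a : upd x i a i = a.
Proof. unfold upd; destruct (Fin.eq_dec i i); congruence. Qed.

Lemma upd_comm {N} (x : pt N) i j a b :
  i <> j -> upd (upd x i a) j b = upd (upd x j b) i a.
Proof.
  intro Hij; apply functional_extensionality; intro l; unfold upd.
  destruct (Fin.eq_dec j l), (Fin.eq_dec i l); subst; auto; congruence.
Qed.

Lemma dist_upd2 {N} (x : pt N) i j a b l :
  Rabs (upd (upd x i a) j b l - x l) <= Rabs (a - x i) + Rabs (b - x j).
Proof.
  pose proof (Rabs_pos (a - x i)); pose proof (Rabs_pos (b - x j)).
  unfold upd; destruct (Fin.eq_dec j l), (Fin.eq_dec i l); subst; try lra;
    rewrite Rminus_diag, Rabs_R0; lra.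
Qed.

Lemma finsum_ext N f g : (forall i, f i = g i) -> finsum N f = finsum N g.
Proof.
  revert f g; induction N; intros f g H; simpl; auto.
  rewrite H, (IHN _ (fun j => g (Fin.FS j))); auto.
Qed.

Lemma finsum_plus N f g :
  finsum N (fun i => f i + g i) = finsum N f + finsum N g.
Proof. revert f g; induction N; intros; simpl; [ring|]. rewrite IHN; ring. Qed.

Lemma finsum_scal N c f : finsum N (fun i => c * f i) = c * finsum N f.
Proof. revert f; induction N; intros; simpl; [ring|]. rewrite IHN; ring. Qed.

Lemma finsum_0 N : finsum N (fun _ => 0) = 0.
Proof. induction N; simpl; auto. rewrite IHN; ring. Qed.

Lemma finsum_const N c : finsum N (fun _ => c) = INR N * c.
Proof. induction N; simpl finsum; [simpl; ring|]. rewrite IHN, S_INR; ring. Qed.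

Lemma finsum_comm N M (f : Fin.t N -> Fin.t M -> R) :
  finsum N (fun i => finsum M (fun j => f i j))
  = finsum M (fun j => finsum N (fun i => f i j)).
Proof.
  revert M f; induction N; intros; simpl.
  - rewrite finsum_0; auto.
  - rewrite IHN, <- finsum_plus; auto.
Qed.

Lemma finsum_le N f g : (forall i, f i <= g i) -> finsum N f <= finsum N g.
Proof.
  revert f g; induction N; intros f g H; simpl; [lra|].
  specialize (IHN (fun j => f (Fin.FS j)) (fun j => g (Fin.FS j)) (fun j => H _)).
  specialize (H Fin.F1); lra.
Qed.

Definition dlt {N} (i j : Fin.t N) : R := if Fin.eq_dec i j then 1 else 0.

Lemma dlt_sym {N} (i j : Fin.t N) : dlt i j = dlt j i.
Proof. unfold dlt; destruct (Fin.eq_dec i j), (Fin.eq_dec j i); subst; congruence. Qed.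

Lemma dlt_eq {N} (i : Fin.t N) : dlt i i = 1.
Proof. unfold dlt; destruct (Fin.eq_dec i i); congruence. Qed.

Lemma dlt_neq {N} (i j : Fin.t N) : i <> j -> dlt i j = 0.
Proof. unfold dlt; destruct (Fin.eq_dec i j); congruence. Qed.

Lemma finsum_dlt N (j : Fin.t N) f : finsum N (fun i => dlt i j * f i) = f j.
Proof.
  revert f; induction N; intros f; [inversion j|].
  pattern j; apply Fin.caseS'; simpl.
  - rewrite dlt_eq, (finsum_ext _ _ (fun _ => 0)), finsum_0; [ring|].
    intro i; rewrite dlt_neq; [ring|]. intro H; inversion H.
  - intro p. rewrite dlt_neq by (intro H; inversion H).
    rewrite (finsum_ext _ _ (fun i => dlt i p * f (Fin.FS i))), IHN; [ring|].
    intro i; unfold dlt.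
    destruct (Fin.eq_dec (Fin.FS i) (Fin.FS p)), (Fin.eq_dec i p); subst; auto.
    + apply Fin.FS_inj in e; congruence.
    + congruence.
Qed.

Lemma finsum_dlt' N (j : Fin.t N) f : finsum N (fun i => f i * dlt i j) = f j.
Proof. rewrite <- (finsum_dlt N j f). apply finsum_ext; intro; ring. Qed.

Lemma finsum_term N g a : (forall i, 0 <= g i) -> g a <= finsum N g.
Proof.
  intro H. rewrite <- (finsum_dlt N a g). apply finsum_le. intro i.
  unfold dlt; destruct (Fin.eq_dec i a); [lra|]. specialize (H i); lra.
Qed.

Lemma finsum_ifeq N (j : Fin.t N) A B :
  finsum N (fun i => if Fin.eq_dec i j then A else B) = A + (INR N - 1) * B.
Proof.
  rewrite (finsum_ext _ _ (fun i => dlt i j * (A - B) + B)).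
  - rewrite finsum_plus, finsum_dlt, finsum_const; ring.
  - intro i; unfold dlt; destruct (Fin.eq_dec i j); ring.
Qed.

(* Finite sums as sums over the list of all indices, for telescoping. *)
Fixpoint enum N : list (Fin.t N) :=
  match N with 0 => nil | S M => Fin.F1 :: map Fin.FS (enum M) end.

Definition lsum {A} (L : list A) (g : A -> R) : R :=
  fold_right (fun a r => g a + r) 0 L.

Lemma lsum_map {A B} (h : A -> B) L g : lsum (map h L) g = lsum L (fun a => g (h a)).
Proof. induction L as [|a L IH]; simpl; auto. unfold lsum in *; simpl; rewrite IH; auto. Qed.

Lemma finsum_lsum N g : finsum N g = lsum (enum N) g.
Proof.
  revert g; induction N; intros; simpl; auto.
  unfold lsum at 1; simpl; fold (lsum (map Fin.FS (enum N)) g).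
  rewrite lsum_map, IHN; auto.
Qed.

Lemma enum_in N a : In a (enum N).
Proof.
  induction N; [inversion a|].
  pattern a; apply Fin.caseS'; simpl; [left; auto|].
  intro p; right; apply in_map; auto.
Qed.

Lemma enum_nodup N : NoDup (enum N).
Proof.
  induction N; simpl; constructor.
  - intro H; apply in_map_iff in H. destruct H as [x [H _]]; inversion H.
  - apply NoDup_map_NoDup_ForallPairs; auto.
    intros x y _ _ H; apply Fin.FS_inj; auto.
Qed.


Lemma dpl_ext f g x l :
  (forall s, f s = g s) -> derivable_pt_lim f x l -> derivable_pt_lim g x l.
Proof. intros H; replace g with f; auto. apply functional_extensionality; auto. Qed.

Lemma dpl_shift g a s0 l :
  derivable_pt_lim g (a + s0) l -> derivable_pt_lim (fun s => g (a + s)) s0 l.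
Proof.
  intros H eps He. destruct (H eps He) as [d Hd]. exists d; intros h Hh Hl.
  replace (a + (s0 + h)) with ((a + s0) + h) by ring. auto.
Qed.

Lemma dpl_finsum N (f : Fin.t N -> R -> R) l x :
  (forall a, derivable_pt_lim (f a) x (l a)) ->
  derivable_pt_lim (fun s => finsum N (fun a => f a s)) x (finsum N l).
Proof.
  revert f l; induction N; intros f l H; simpl.
  - apply derivable_pt_lim_const.
  - apply (derivable_pt_lim_plus (f Fin.F1) (fun s => finsum N (fun a => f (Fin.FS a) s)));
      [auto|].
    apply (IHN (fun a => f (Fin.FS a)) (fun a => l (Fin.FS a))); auto.
Qed.

Lemma MVT_gen f f' a b : (forall c, derivable_pt_lim f c (f' c)) ->
  exists c, f b - f a = f' c * (b - a) /\ Rabs (c - a) <= Rabs (b - a).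
Proof.
  intro H. destruct (Rtotal_order a b) as [Hab|[Hab|Hab]].
  - destruct (MVT_cor2 f f' a b Hab (fun c _ => H c)) as [c [E Hc]].
    exists c; split; auto. rewrite !Rabs_right; lra.
  - subst; exists b; split; [ring|]. right; auto.
  - destruct (MVT_cor2 f f' b a Hab (fun c _ => H c)) as [c [E Hc]].
    exists c; split; [lra|]. rewrite !Rabs_left1; lra.
Qed.

Definition ld {N} (f : pt N -> R) i x l : Prop :=
  derivable_pt_lim (fun t => f (upd x i t)) (x i) l.

Definition d1 {N} (f : pt N -> R) i (D : pt N -> R) : Prop := forall y, ld f i y (D y).

Lemma d1_line {N} (f : pt N -> R) i D : d1 f i D ->
  forall y s0, derivable_pt_lim (fun s => f (upd y i s)) s0 (D (upd y i s0)).
Proof.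
  intros H y s0. specialize (H (upd y i s0)). unfold ld in H.
  rewrite upd_eq in H. eapply dpl_ext; [|exact H].
  intro s; simpl; rewrite upd_upd; auto.
Qed.

Lemma ld_unique {N} (f : pt N -> R) i x l1 l2 : ld f i x l1 -> ld f i x l2 -> l1 = l2.
Proof. apply uniqueness_limite. Qed.

Lemma ld_ext {N} (f g : pt N -> R) i x l :
  (forall y, f y = g y) -> ld f i x l -> ld g i x l.
Proof. intros H; replace g with f; auto. apply functional_extensionality; auto. Qed.

Lemma ld_val {N} (f : pt N -> R) i x l l' : ld f i x l -> l = l' -> ld f i x l'.
Proof. intros H ->; auto. Qed.

Lemma ld_const {N} c i (x : pt N) : ld (fun _ => c) i x 0.
Proof. exact (derivable_pt_lim_const c (x i)). Qed.

Lemma ld_proj {N} a i (x : pt N) : ld (fun y => y a) i x (dlt i a).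
Proof.
  unfold ld, upd, dlt. destruct (Fin.eq_dec i a).
  - apply derivable_pt_lim_id.
  - apply derivable_pt_lim_const.
Qed.

Lemma ld_plus {N} (f g : pt N -> R) i x lf lg : ld f i x lf -> ld g i x lg ->
  ld (fun y => f y + g y) i x (lf + lg).
Proof. intros Hf Hg. apply (derivable_pt_lim_plus _ _ _ _ _ Hf Hg). Qed.

Lemma ld_mult {N} (f g : pt N -> R) i x lf lg : ld f i x lf -> ld g i x lg ->
  ld (fun y => f y * g y) i x (lf * g x + f x * lg).
Proof.
  intros Hf Hg. pose proof (derivable_pt_lim_mult _ _ _ _ _ Hf Hg) as H.
  unfold mult_fct in H; cbv beta in H; rewrite upd_same in H; exact H.
Qed.

Lemma ld_scal {N} (f : pt N -> R) c i x l :
  ld f i x l -> ld (fun y => c * f y) i x (c * l).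
Proof. intros H; apply (derivable_pt_lim_scal _ c _ _ H). Qed.

Lemma ld_finsum {N} M (f : Fin.t M -> pt N -> R) l i x :
  (forall a, ld (f a) i x (l a)) -> ld (fun y => finsum M (fun a => f a y)) i x (finsum M l).
Proof. intro H. apply (dpl_finsum M (fun a t => f a (upd x i t))); auto. Qed.

Lemma cont_const {N} c : cont (fun _ : pt N => c).
Proof.
  intros x e He; exists 1; split; [lra|].
  intros; rewrite Rminus_diag, Rabs_R0; auto.
Qed.

Lemma cont_plus {N} (f g : pt N -> R) : cont f -> cont g -> cont (fun y => f y + g y).
Proof.
  intros Hf Hg x e He.
  destruct (Hf x (e/2)) as [d1 [Hd1 H1]]; [lra|].
  destruct (Hg x (e/2)) as [d2 [Hd2 H2]]; [lra|].
  exists (Rmin d1 d2); split; [apply Rmin_glb_lt; auto|]. intros y Hy.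
  assert (A1 := H1 y (fun i => Rlt_le_trans _ _ _ (Hy i) (Rmin_l _ _))).
  assert (A2 := H2 y (fun i => Rlt_le_trans _ _ _ (Hy i) (Rmin_r _ _))).
  replace (f y + g y - (f x + g x)) with ((f y - f x) + (g y - g x)) by ring.
  eapply Rle_lt_trans; [apply Rabs_triang|]. lra.
Qed.

Lemma cont_mult {N} (f g : pt N -> R) : cont f -> cont g -> cont (fun y => f y * g y).
Proof.
  intros Hf Hg x e He.
  set (A := Rabs (g x) + 1). set (B := Rabs (f x) + 1).
  assert (HA : 0 < A) by (unfold A; pose proof (Rabs_pos (g x)); lra).
  assert (HB : 0 < B) by (unfold B; pose proof (Rabs_pos (f x)); lra).
  destruct (Hf x (e/(2*A))) as [d1 [Hd1 H1]]; [apply Rdiv_lt_0_compat; lra|].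
  destruct (Hg x (Rmin 1 (e/(2*B)))) as [d2 [Hd2 H2]].
  { apply Rmin_glb_lt; [lra|apply Rdiv_lt_0_compat; lra]. }
  exists (Rmin d1 d2); split; [apply Rmin_glb_lt; auto|]. intros y Hy.
  assert (A1 := H1 y (fun i => Rlt_le_trans _ _ _ (Hy i) (Rmin_l _ _))).
  assert (A2 := H2 y (fun i => Rlt_le_trans _ _ _ (Hy i) (Rmin_r _ _))).
  pose proof (Rmin_l 1 (e/(2*B))); pose proof (Rmin_r 1 (e/(2*B))).
  assert (Hgy : Rabs (g y) <= A).
  { unfold A. replace (g y) with (g x + (g y - g x)) by ring.
    eapply Rle_trans; [apply Rabs_triang|]. lra. }
  replace (f y * g y - f x * g x) with ((f y - f x) * g y + f x * (g y - g x)) by ring.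
  eapply Rle_lt_trans; [apply Rabs_triang|]. rewrite !Rabs_mult.
  assert (T1 : Rabs (f y - f x) * Rabs (g y) < e / 2).
  { apply Rle_lt_trans with (Rabs (f y - f x) * A).
    - apply Rmult_le_compat_l; [apply Rabs_pos|lra].
    - replace (e / 2) with (e/(2*A) * A) by (field; apply Rgt_not_eq; exact HA).
      apply Rmult_lt_compat_r; lra. }
  assert (T2 : Rabs (f x) * Rabs (g y - g x) <= e / 2).
  { replace (e / 2) with (B * (e/(2*B))) by (field; apply Rgt_not_eq; exact HB).
    apply Rmult_le_compat; try apply Rabs_pos; [unfold B; lra | lra]. }
  lra.
Qed.

Lemma Ck_cont {N} k (f : pt N -> R) : Ck k f -> cont f.
Proof. destruct k; simpl; tauto. Qed.

Lemma Ck_down {N} k (f : pt N -> R) : Ck (S k) f -> Ck k f.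
Proof.
  revert f; induction k; intros f H.
  - simpl in *; tauto.
  - destruct H as [Hc [D [HD HDk]]]. split; auto. exists D; split; auto.
Qed.

Lemma Ck_const {N} k c : Ck k (fun _ : pt N => c).
Proof.
  revert c; induction k; intro c; (split; [apply cont_const|]); auto.
  exists (fun _ _ => 0); split; auto. intros i x; apply ld_const.
Qed.

Lemma Ck_plus {N} k (f g : pt N -> R) : Ck k f -> Ck k g -> Ck k (fun y => f y + g y).
Proof.
  revert f g; induction k; intros f g Hf Hg.
  - split; auto. apply cont_plus; apply (Ck_cont 0); auto.
  - destruct Hf as [Hfc [Df [HDf HDfk]]], Hg as [Hgc [Dg [HDg HDgk]]].
    split; [apply cont_plus; auto|].
    exists (fun i y => Df i y + Dg i y); split; auto.
    intros i x; apply (ld_plus f g); [apply HDf|apply HDg].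
Qed.

Lemma Ck_mult {N} k (f g : pt N -> R) : Ck k f -> Ck k g -> Ck k (fun y => f y * g y).
Proof.
  revert f g; induction k; intros f g Hf Hg.
  - split; auto. apply cont_mult; apply (Ck_cont 0); auto.
  - pose proof (Ck_down _ _ Hf) as Hf'; pose proof (Ck_down _ _ Hg) as Hg'.
    destruct Hf as [Hfc [Df [HDf HDfk]]], Hg as [Hgc [Dg [HDg HDgk]]].
    split; [apply cont_mult; auto|].
    exists (fun i y => Df i y * g y + f y * Dg i y); split.
    + intros i x; apply (ld_mult f g); [apply HDf|apply HDg].
    + intro i; apply Ck_plus; apply IHk; auto.
Qed.

Lemma Ck_scal {N} k c (f : pt N -> R) : Ck k f -> Ck k (fun y => c * f y).
Proof. intro H; apply (Ck_mult k (fun _ => c) f); auto. apply Ck_const. Qed.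

Lemma Ck_of_flat {N} (h : pt N -> R) :
  cont h -> (forall i, d1 h i (fun _ => 0)) -> forall k, Ck k h.
Proof.
  intros Hc Hd k; destruct k; simpl; split; auto.
  exists (fun _ _ => 0); split; [intros i x; apply Hd|]. intro; apply Ck_const.
Qed.


(** Schwarz's theorem: continuous mixed partial derivatives commute. *)

(* The second difference of f over a square of side h, written through the
   mean value theorem applied twice. *)
Lemma second_difference_mvt {N} (f : pt N -> R) i j Di Eij (x : pt N) h :
  i <> j -> d1 f i Di -> d1 Di j Eij ->
  exists s t, Rabs s <= Rabs h /\ Rabs t <= Rabs h /\
   f (upd (upd x i (x i + h)) j (x j + h)) - f (upd (upd x i (x i + h)) j (x j + 0))
   - f (upd (upd x i (x i + 0)) j (x j + h)) + f (upd (upd x i (x i + 0)) j (x j + 0))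
   = Eij (upd (upd x i (x i + s)) j (x j + t)) * (h * h).
Proof.
  intros Hij Hf HD.
  set (q := fun s u => upd (upd x i (x i + s)) j (x j + u)).
  assert (Hdi : forall u s0, derivable_pt_lim (fun s => f (q s u)) s0 (Di (q s0 u))).
  { intros u s0. unfold q; rewrite (upd_comm x i j) by auto.
    eapply dpl_ext; [intro s; rewrite (upd_comm x i j) by auto; reflexivity|].
    apply (dpl_shift (fun sg => f (upd (upd x j (x j + u)) i sg))), d1_line; auto. }
  destruct (MVT_gen (fun s => f (q s h) - f (q s 0)) (fun s => Di (q s h) - Di (q s 0)) 0 h)
    as [s [E1 Hs]].
  { intro c; apply derivable_pt_lim_minus; apply Hdi. }
  assert (Hdj : forall u0, derivable_pt_lim (fun u => Di (q s u)) u0 (Eij (q s u0))).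
  { intros u0. apply (dpl_shift (fun sg => Di (upd (upd x i (x i + s)) j sg))), d1_line; auto. }
  destruct (MVT_gen (fun u => Di (q s u)) (fun u => Eij (q s u)) 0 h) as [t [E2 Ht]]; auto.
  exists s, t. rewrite !Rminus_0_r in *. split; [auto|split; [auto|]].
  change (f (q h h) - f (q h 0) - f (q 0 h) + f (q 0 0) = Eij (q s t) * (h * h)).
  replace (f (q h h) - f (q h 0) - f (q 0 h) + f (q 0 0))
    with ((f (q h h) - f (q h 0)) - (f (q 0 h) - f (q 0 0))) by ring.
  rewrite E1, E2; ring.
Qed.

Lemma schwarz {N} (f : pt N -> R) i j Di Dj Eij Eji : i <> j ->
  d1 f i Di -> d1 f j Dj -> d1 Di j Eij -> d1 Dj i Eji -> cont Eij -> cont Eji ->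
  forall x, Eij x = Eji x.
Proof.
  intros Hij Hfi Hfj HDi HDj Hc1 Hc2 x.
  destruct (Req_dec (Eij x) (Eji x)) as [|Hne]; auto. exfalso.
  set (e := Rabs (Eij x - Eji x) / 2).
  assert (He : 0 < e) by (unfold e; apply Rdiv_lt_0_compat; [apply Rabs_pos_lt; lra|lra]).
  destruct (Hc1 x e He) as [d1 [Hd1 H1]]. destruct (Hc2 x e He) as [d2 [Hd2 H2]].
  set (h := Rmin d1 d2 / 4).
  assert (Hh : 0 < h) by (unfold h; apply Rdiv_lt_0_compat; [apply Rmin_glb_lt; auto|lra]).
  destruct (second_difference_mvt f i j Di Eij x h Hij Hfi HDi) as [s [t [Hs [Ht E1]]]].
  destruct (second_difference_mvt f j i Dj Eji x h (not_eq_sym Hij) Hfj HDj)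
    as [s' [t' [Hs' [Ht' E2]]]].
  rewrite !(upd_comm x j i) in E2 by auto.
  set (p := upd (upd x i (x i + s)) j (x j + t)).
  set (p' := upd (upd x j (x j + s')) i (x i + t')).
  (* Both mean values equal the same second difference divided by h^2. *)
  assert (Eq : Eij p = Eji p').
  { apply Rmult_eq_reg_r with (h * h); [|apply Rgt_not_eq; nra].
    unfold p, p'; rewrite <- E1, (upd_comm x j i), <- E2 by auto; ring. }
  rewrite (Rabs_pos_eq h) in Hs, Ht, Hs', Ht' by lra.
  pose proof (Rmin_l d1 d2); pose proof (Rmin_r d1 d2).
  assert (B1 : Rabs (Eij p - Eij x) < e).
  { apply H1; intro l. eapply Rle_lt_trans; [apply dist_upd2|].
    replace (x i + s - x i) with s by ring. replace (x j + t - x j) with t by ring.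
    unfold h in *; lra. }
  assert (B2 : Rabs (Eji p' - Eji x) < e).
  { apply H2; intro l. eapply Rle_lt_trans; [apply dist_upd2|].
    replace (x j + s' - x j) with s' by ring. replace (x i + t' - x i) with t' by ring.
    unfold h in *; lra. }
  rewrite Eq in B1.
  assert (Hlt : Rabs (Eij x - Eji x) < 2 * e).
  { replace (Eij x - Eji x) with ((Eji p' - Eji x) - (Eji p' - Eij x)) by ring.
    eapply Rle_lt_trans; [apply Rabs_triang|]. rewrite Rabs_Ropp. lra. }
  unfold e in Hlt; lra.
Qed.

(** First-order expansion and the chain rule. *)

Lemma fin_uniform_delta N (P : Fin.t N -> R -> Prop) :
  (forall a, exists d, 0 < d /\ P a d) ->
  (forall a d d', 0 < d' <= d -> P a d -> P a d') ->
  exists d, 0 < d /\ forall a, P a d.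
Proof.
  revert P; induction N; intros P H Hm.
  - exists 1; split; [lra|]. intro a; inversion a.
  - destruct (IHN (fun a => P (Fin.FS a))) as [d' [Hd' H']]; auto.
    { intros; eapply Hm; eauto. }
    destruct (H Fin.F1) as [d0 [Hd0 H0]].
    exists (Rmin d0 d'); split; [apply Rmin_glb_lt; auto|].
    intro a; pattern a; apply Fin.caseS'.
    + eapply Hm; [|exact H0]. split; [apply Rmin_glb_lt; auto|apply Rmin_l].
    + intro p; eapply Hm; [|exact (H' p)]. split; [apply Rmin_glb_lt; auto|apply Rmin_r].
Qed.

Definition splice {N} (L : list (Fin.t N)) (w z : pt N) : pt N :=
  fun a => if in_dec Fin.eq_dec a L then w a else z a.

Lemma splice_cons {N} (L : list (Fin.t N)) a w z : ~ In a L ->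
  splice (a :: L) w z = upd (splice L w z) a (w a).
Proof.
  intro HaL; apply functional_extensionality; intro l; unfold splice, upd.
  destruct (Fin.eq_dec a l) as [<-|Hal].
  - destruct (in_dec Fin.eq_dec a (a :: L)); auto. exfalso; apply n; left; auto.
  - destruct (in_dec Fin.eq_dec l (a :: L)) as [[E|I]|NI], (in_dec Fin.eq_dec l L);
      auto; try congruence; exfalso; auto using in_cons.
Qed.

Section FirstOrderExpansion.
Variables (N : nat) (f : pt N -> R) (D : Fin.t N -> pt N -> R) (z w : pt N) (d e : R).
Hypothesis f_partials : forall a, d1 f a (D a).
Hypothesis D_close : forall a y, (forall l, Rabs (y l - z l) < d) -> Rabs (D a y - D a z) < e.
Hypothesis w_close : forall a, Rabs (w a - z a) < d.

(* Moving from z to w one coordinate at a time, each step is controlled by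
   the mean value theorem. *)
Lemma expansion_along L : NoDup L ->
  Rabs (f (splice L w z) - f z - lsum L (fun a => D a z * (w a - z a)))
  <= e * lsum L (fun a => Rabs (w a - z a)).
Proof.
  induction L as [|a L IH]; intro Hnd.
  - assert (splice nil w z = z) as -> by (apply functional_extensionality; reflexivity).
    unfold lsum; simpl. replace (f z - f z - 0) with 0 by ring. rewrite Rabs_R0; lra.
  - inversion Hnd as [|? ? HaL HL]; subst. specialize (IH HL).
    assert (Ha : splice L w z a = z a).
    { unfold splice; destruct (in_dec Fin.eq_dec a L); auto; contradiction. }
    destruct (MVT_gen (fun s => f (upd (splice L w z) a s))
                      (fun s => D a (upd (splice L w z) a s)) (z a) (w a)) as [s [E Hs]].
    { intro c; apply d1_line; auto. }
    rewrite <- Ha, upd_same, <- splice_cons, Ha in E by auto.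
    assert (Hxi : Rabs (D a (upd (splice L w z) a s) - D a z) < e).
    { apply D_close; intro l. unfold upd. destruct (Fin.eq_dec a l) as [<-|].
      - specialize (w_close a); lra.
      - unfold splice; destruct (in_dec Fin.eq_dec l L); auto.
        rewrite Rminus_diag, Rabs_R0. apply (Rle_lt_trans _ _ _ (Rabs_pos _) (w_close l)). }
    unfold lsum; simpl; fold (lsum L (fun a => D a z * (w a - z a)));
      fold (lsum L (fun a => Rabs (w a - z a))).
    replace (f (splice (a :: L) w z) - f z
             - (D a z * (w a - z a) + lsum L (fun a0 => D a0 z * (w a0 - z a0))))
      with ((f (splice L w z) - f z - lsum L (fun a0 => D a0 z * (w a0 - z a0)))
            + (D a (upd (splice L w z) a s) - D a z) * (w a - z a)) by lra.
    eapply Rle_trans; [apply Rabs_triang|]. rewrite Rabs_mult.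
    assert (Rabs (D a (upd (splice L w z) a s) - D a z) * Rabs (w a - z a)
            <= e * Rabs (w a - z a)) by (apply Rmult_le_compat_r; [apply Rabs_pos|lra]).
    lra.
Qed.

End FirstOrderExpansion.

Lemma first_order_expansion {N} (f : pt N -> R) D z e :
  (forall a, d1 f a (D a)) -> (forall a, cont (D a)) -> 0 < e ->
  exists d, 0 < d /\ forall w, (forall a, Rabs (w a - z a) < d) ->
  Rabs (f w - f z - finsum N (fun a => D a z * (w a - z a)))
  <= e * finsum N (fun a => Rabs (w a - z a)).
Proof.
  intros Hd Hc He.
  destruct (fin_uniform_delta N (fun a d => forall y,
              (forall l, Rabs (y l - z l) < d) -> Rabs (D a y - D a z) < e))
    as [d [Hd0 Hmin]].
  { intro a. destruct (Hc a z e He) as [d [Hd0 H]]. exists d; auto. }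
  { intros a d d' Hdd H y Hy. apply H. intro l. specialize (Hy l); lra. }
  exists d; split; auto. intros w Hw.
  assert (splice (enum N) w z = w) as Hall.
  { apply functional_extensionality; intro l; unfold splice.
    destruct (in_dec Fin.eq_dec l (enum N)); auto. exfalso; apply n, enum_in. }
  rewrite !finsum_lsum, <- Hall at 1.
  apply (expansion_along N f D z w d e); auto using enum_nodup.
Qed.


Lemma dpl_local_lipschitz g t0 l : derivable_pt_lim g t0 l ->
  exists d, 0 < d /\ forall h, Rabs h < d ->
    Rabs (g (t0 + h) - g t0) <= (Rabs l + 1) * Rabs h.
Proof.
  intro Hg. destruct (Hg 1 Rlt_0_1) as [d Hd].
  exists d; split; [apply cond_pos|]. intros h Hh.
  destruct (Req_dec h 0) as [->|Hh0].
  - rewrite Rplus_0_r, Rminus_diag, !Rabs_R0; lra.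
  - specialize (Hd h Hh0 Hh).
    replace (g (t0 + h) - g t0) with (((g (t0 + h) - g t0) / h - l) * h + l * h)
      by (field; auto).
    eapply Rle_trans; [apply Rabs_triang|]. rewrite !Rabs_mult.
    pose proof (Rabs_pos h); nra.
Qed.

Lemma dpl_zero_of_small_increment g t0 :
  (forall e, 0 < e -> exists d, 0 < d /\ forall h, h <> 0 -> Rabs h < d ->
     Rabs (g (t0 + h) - g t0) <= e * Rabs h) ->
  derivable_pt_lim g t0 0.
Proof.
  intros H eps Heps. destruct (H (eps / 2)) as [d [Hd Hsmall]]; [lra|].
  exists (mkposreal d Hd); intros h Hh0 Hh; simpl in Hh.
  assert (Hpos : 0 < Rabs h) by (apply Rabs_pos_lt; auto).
  rewrite Rminus_0_r; unfold Rdiv; rewrite Rabs_mult, Rabs_inv.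
  apply Rle_lt_trans with (eps / 2 * Rabs h * / Rabs h).
  - apply Rmult_le_compat_r; [left; apply Rinv_0_lt_compat|]; auto.
  - replace (eps / 2 * Rabs h * / Rabs h) with (eps / 2) by (field; lra). lra.
Qed.

Lemma linearisation_remainder {N} (f : pt N -> R) D (c : R -> pt N) c' t0 :
  (forall a, d1 f a (D a)) -> (forall a, cont (D a)) ->
  (forall a, derivable_pt_lim (fun t => c t a) t0 (c' a)) ->
  derivable_pt_lim (fun t => f (c t) - finsum N (fun a => D a (c t0) * c t a)) t0 0.
Proof.
  intros Hd Hc Hcd. set (z := c t0).
  apply dpl_zero_of_small_increment; intros e He.
  set (M := finsum N (fun a => Rabs (c' a) + 1) + 1).
  assert (Hterm : forall a, 0 <= Rabs (c' a) + 1)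
    by (intro a; pose proof (Rabs_pos (c' a)); lra).
  assert (HcM : forall a, Rabs (c' a) + 1 <= M)
    by (intro a; pose proof (finsum_term N _ a Hterm); unfold M; lra).
  assert (HM : 1 <= M) by (unfold M; pose proof (finsum_le N (fun _ => 0) _ Hterm);
                           rewrite finsum_0 in *; lra).
  destruct (first_order_expansion f D z (e / M) Hd Hc) as [d1 [Hd1 Hexp]].
  { apply Rdiv_lt_0_compat; lra. }
  destruct (fin_uniform_delta N (fun a d => forall h, Rabs h < d ->
              Rabs (c (t0 + h) a - c t0 a) <= (Rabs (c' a) + 1) * Rabs h))
    as [d2 [Hd2 Hlip]].
  { intro a; apply (dpl_local_lipschitz (fun t => c t a)), Hcd. }
  { intros a d d' Hdd H h Hh; apply H; lra. }
  exists (Rmin d2 (d1 / M)); split.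
  { apply Rmin_glb_lt; [auto|apply Rdiv_lt_0_compat; lra]. }
  intros h _ Hh; cbv beta. set (w := c (t0 + h)).
  pose proof (Rmin_l d2 (d1 / M)); pose proof (Rmin_r d2 (d1 / M)).
  assert (Hw : forall a, Rabs (w a - z a) <= M * Rabs h).
  { intro a. eapply Rle_trans; [apply Hlip; lra|].
    apply Rmult_le_compat_r; [apply Rabs_pos|auto]. }
  assert (Hwd : forall a, Rabs (w a - z a) < d1).
  { intro a. eapply Rle_lt_trans; [apply Hw|].
    replace d1 with (M * (d1 / M)) by (field; lra).
    apply Rmult_lt_compat_l; lra. }
  assert (Hsum : finsum N (fun a => Rabs (w a - z a)) <= M * Rabs h).
  { eapply Rle_trans.
    - apply (finsum_le N _ (fun a => Rabs h * (Rabs (c' a) + 1))).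
      intro a; rewrite Rmult_comm; apply Hlip; lra.
    - rewrite finsum_scal. pose proof (Rabs_pos h). unfold M; nra. }
  change (Rabs (f w - finsum N (fun a => D a z * w a)
                - (f z - finsum N (fun a => D a z * z a))) <= e * Rabs h).
  replace (f w - finsum N (fun a => D a z * w a) - (f z - finsum N (fun a => D a z * z a)))
    with (f w - f z - finsum N (fun a => D a z * (w a - z a))).
  - eapply Rle_trans; [apply (Hexp w Hwd)|].
    replace (e * Rabs h) with (e / M * (M * Rabs h)) by (field; lra).
    apply Rmult_le_compat_l; [left; apply Rdiv_lt_0_compat; lra|auto].
  - rewrite (finsum_ext N (fun a => D a z * w a)
               (fun a => D a z * (w a - z a) + D a z * z a)) by (intro; ring).
    rewrite finsum_plus; ring.
Qed.

Lemma chain_rule {N} (f : pt N -> R) D (c : R -> pt N) c' t0 :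
  (forall a, d1 f a (D a)) -> (forall a, cont (D a)) ->
  (forall a, derivable_pt_lim (fun t => c t a) t0 (c' a)) ->
  derivable_pt_lim (fun t => f (c t)) t0 (finsum N (fun a => D a (c t0) * c' a)).
Proof.
  intros Hd Hc Hcd.
  pose proof (linearisation_remainder f D c c' t0 Hd Hc Hcd) as Hrem.
  assert (Hlin : derivable_pt_lim (fun t => finsum N (fun a => D a (c t0) * c t a)) t0
                                  (finsum N (fun a => D a (c t0) * c' a))).
  { apply (dpl_finsum N (fun a t => D a (c t0) * c t a)); intro a.
    apply (derivable_pt_lim_scal (fun t => c t a)), Hcd. }
  pose proof (derivable_pt_lim_plus _ _ _ _ _ Hrem Hlin) as Hsum.
  rewrite Rplus_0_l in Hsum. eapply dpl_ext; [|exact Hsum].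
  intro t; unfold plus_fct; ring.
Qed.


(** Rigidity of conformal maps with harmonic components.  Throughout,
    [eta] is a signature (eta_i = +-1), the quadratic form being
    sum_i eta_i v_i^2. *)

Lemma conformal_transpose N (eta : Fin.t N -> R) (J K : Fin.t N -> Fin.t N -> R) mu :
  (forall i, eta i * eta i = 1) ->
  (forall k i, finsum N (fun a => K k a * J a i) = dlt k i) ->
  (forall a b, finsum N (fun i => eta i * (J a i * J b i)) = mu * eta a * dlt a b) ->
  forall i j, finsum N (fun a => eta a * (J a i * J a j)) = mu * eta j * dlt i j.
Proof.
  intros Heta KJ Hconf.
  (* Multiplying J eta J^T = mu eta by K on the left: eta J^T = mu K eta. *)
  assert (Hrow : forall k b, eta k * J b k = mu * eta b * K k b).
  { intros k b.
    transitivity (finsum N (fun a => K k a * finsum N (fun i => eta i * (J a i * J b i)))).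
    - rewrite (finsum_ext _ _ (fun a => finsum N (fun i => K k a * (eta i * (J a i * J b i)))))
        by (intro; rewrite <- finsum_scal; auto).
      rewrite finsum_comm.
      rewrite (finsum_ext _ _ (fun i => (eta i * J b i) * dlt i k)).
      + symmetry; apply (finsum_dlt' N k (fun i => eta i * J b i)).
      + intro i. rewrite dlt_sym, <- KJ, <- finsum_scal.
        apply finsum_ext; intro; ring.
    - rewrite (finsum_ext _ _ (fun a => (K k a * mu * eta a) * dlt a b))
        by (intro a; rewrite Hconf; ring).
      rewrite finsum_dlt'; ring. }
  intros i j.
  rewrite (finsum_ext _ _ (fun a => (eta j * mu) * (K j a * J a i))).
  - rewrite finsum_scal, KJ, dlt_sym; ring.
  - intro a. replace (J a j) with (eta j * (mu * eta a * K j a))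
      by (rewrite <- Hrow, <- Rmult_assoc, Heta; ring).
    replace (eta a * (J a i * (eta j * (mu * eta a * K j a))))
      with ((eta a * eta a) * ((eta j * mu) * (K j a * J a i))) by ring.
    rewrite Heta; ring.
Qed.

Lemma christoffel_vanish N (eta : Fin.t N -> R) (Gm : Fin.t N -> Fin.t N -> Fin.t N -> R) :
  (forall i, eta i * eta i = 1) -> 3 <= INR N ->
  (forall i k j, Gm i k j = Gm k i j) ->
  (forall i j k, i <> j -> Gm i k j + Gm j k i = 0) ->
  (forall i j k, Gm i k i = eta i * eta j * Gm j k j) ->
  (forall j, finsum N (fun i => eta i * Gm i i j) = 0) ->
  forall i k j, Gm i k j = 0.
Proof.
  intros Heta HN Hsym Hoff Hdiag Htrace.
  (* The trace condition forces (2 - N) eta_j Gamma_jjj = 0. *)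
  assert (Hjjj : forall j, Gm j j j = 0).
  { intro j. set (m := eta j * Gm j j j).
    pose proof (Htrace j) as E.
    rewrite (finsum_ext _ _ (fun i => if Fin.eq_dec i j then m else - m)) in E.
    - rewrite finsum_ifeq in E.
      replace (Gm j j j) with (eta j * m) by (unfold m; rewrite <- Rmult_assoc, Heta; ring).
      assert (m = 0) as -> by nra. ring.
    - intro i. destruct (Fin.eq_dec i j) as [->|Hij]; [reflexivity|].
      replace (Gm i i j) with (- Gm j i i) by (pose proof (Hoff i j i Hij); lra).
      rewrite Hsym, (Hdiag i j j).
      replace (eta i * - (eta i * eta j * Gm j j j)) with (- (eta i * eta i) * m)
        by (unfold m; ring).
      rewrite Heta; ring. }
  assert (Hiki : forall i k, Gm i k i = 0)
    by (intros i k; rewrite (Hdiag i k k), Hjjj; ring).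
  assert (Hanti : forall i k j, Gm i k j = - Gm j k i).
  { intros i k j. destruct (Fin.eq_dec i j) as [<-|Hij].
    - rewrite Hiki; ring.
    - pose proof (Hoff i j k Hij); lra. }
  (* Symmetric in the first pair and antisymmetric in the outer pair. *)
  intros i k j.
  pose proof (Hanti i k j); pose proof (Hsym j k i); pose proof (Hanti k j i);
    pose proof (Hsym i j k); pose proof (Hanti j i k); pose proof (Hsym k i j).
  lra.
Qed.

Section ConformalRigidity.
(* J a i = d_i F^a and H a i k = d_k d_i F^a for a map F, whose Jacobian has
   the pointwise left and right inverse K. *)
Variables (N : nat) (eta : Fin.t N -> R) (mu : pt N -> R).
Variables (J : Fin.t N -> Fin.t N -> pt N -> R)
          (H : Fin.t N -> Fin.t N -> Fin.t N -> pt N -> R)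
          (K : pt N -> Fin.t N -> Fin.t N -> R).
Hypothesis eta_sq : forall i, eta i * eta i = 1.
Hypothesis dim_ge3 : 3 <= INR N.
Hypothesis J_deriv : forall a i k, d1 (J a i) k (H a i k).
Hypothesis H_sym : forall a i k x, H a i k x = H a k i x.
Hypothesis K_left : forall x k i, finsum N (fun a => K x k a * J a i x) = dlt k i.
Hypothesis K_right : forall x a j, finsum N (fun b => J a b x * K x b j) = dlt a j.
Hypothesis harmonic : forall x a, finsum N (fun i => eta i * H a i i x) = 0.
Hypothesis conformal : forall x a b,
  finsum N (fun i => eta i * (J a i x * J b i x)) = mu x * eta a * dlt a b.

(* The pulled-back metric g_ij = sum_a eta_a J_ai J_aj and its Christoffel
   symbols of the first kind (up to symmetrisation). *)
Definition metric (i j : Fin.t N) (y : pt N) : R :=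
  finsum N (fun a => eta a * (J a i y * J a j y)).

Definition christoffel (x : pt N) (i k j : Fin.t N) : R :=
  finsum N (fun a => eta a * (H a i k x * J a j x)).

Lemma metric_conformal i j y : metric i j y = mu y * eta j * dlt i j.
Proof. apply (conformal_transpose N eta (fun a i => J a i y) (K y)); auto. Qed.

Lemma metric_deriv i j k x :
  ld (metric i j) k x (christoffel x i k j + christoffel x j k i).
Proof.
  unfold christoffel; rewrite <- finsum_plus.
  eapply ld_val; [apply ld_finsum; intro a; apply ld_scal, ld_mult; apply J_deriv|].
  apply finsum_ext; intro a; ring.
Qed.

Lemma christoffel_off x i j k : i <> j -> christoffel x i k j + christoffel x j k i = 0.
Proof.
  intro Hij. apply (ld_unique (metric i j) k x); [apply metric_deriv|].
  apply (ld_ext (fun _ => 0)); [|apply ld_const].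
  intro y; rewrite metric_conformal, dlt_neq by auto; ring.
Qed.

Lemma christoffel_diag x i j k :
  christoffel x i k i = eta i * eta j * christoffel x j k j.
Proof.
  (* g_ii = eta_i eta_j g_jj as functions, so their derivatives agree. *)
  assert (E : christoffel x i k i + christoffel x i k i
              = eta i * eta j * (christoffel x j k j + christoffel x j k j)).
  { apply (ld_unique (metric i i) k x); [apply metric_deriv|].
    apply (ld_ext (fun y => eta i * eta j * metric j j y)); [|apply ld_scal, metric_deriv].
    intro y; rewrite !metric_conformal, !dlt_eq.
    replace (eta i * eta j * (mu y * eta j * 1)) with ((eta j * eta j) * (mu y * eta i * 1))
      by ring.
    rewrite eta_sq; ring. }
  lra.
Qed.

Lemma christoffel_trace x j : finsum N (fun i => eta i * christoffel x i i j) = 0.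
Proof.
  unfold christoffel.
  rewrite (finsum_ext _ _ (fun i => finsum N (fun a => (eta a * J a j x) * (eta i * H a i i x))))
    by (intro i; rewrite <- finsum_scal; apply finsum_ext; intro; ring).
  rewrite finsum_comm, (finsum_ext _ _ (fun _ => 0)), finsum_0; auto.
  intro a; rewrite finsum_scal, harmonic; ring.
Qed.

Theorem conformal_harmonic_affine a i k x : H a i k x = 0.
Proof.
  assert (Hzero : forall i k j, christoffel x i k j = 0).
  { apply (christoffel_vanish N eta); auto.
    - intros i' k' j'; unfold christoffel; apply finsum_ext; intro; rewrite H_sym; auto.
    - intros; apply christoffel_off; auto.
    - intros; apply christoffel_diag.
    - apply christoffel_trace. }
  (* Undo the contraction with J using its right inverse K. *)
  assert (E : finsum N (fun j => christoffel x i k j * K x j a) = eta a * H a i k x).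
  { unfold christoffel.
    rewrite (finsum_ext _ _ (fun j => finsum N (fun b => (eta b * H b i k x) * (J b j x * K x j a))))
      by (intro j; rewrite Rmult_comm, <- finsum_scal; apply finsum_ext; intro; ring).
    rewrite finsum_comm, (finsum_ext _ _ (fun b => (eta b * H b i k x) * dlt b a)).
    - apply finsum_dlt'.
    - intro b; rewrite finsum_scal, K_right; auto. }
  rewrite (finsum_ext _ _ (fun _ => 0)), finsum_0 in E by (intro; rewrite Hzero; ring).
  replace (H a i k x) with (eta a * (eta a * H a i k x)) by (rewrite <- Rmult_assoc, eta_sq; ring).
  rewrite <- E; ring.
Qed.

End ConformalRigidity.


Lemma C2_map_derivatives {N} (P : pt N -> pt N) : Ck_map 2 P -> exists DP EP,
  (forall a, cont (fun x => P x a)) /\ (forall a i, d1 (fun x => P x a) i (DP a i)) /\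
  (forall a i, cont (DP a i)) /\ (forall a i k, d1 (DP a i) k (EP a i k)) /\
  (forall a i k, cont (EP a i k)).
Proof.
  intro HP.
  destruct (functional_choice (fun a (Da : Fin.t N -> pt N -> R) =>
     (forall i, d1 (fun x => P x a) i (Da i)) /\ forall i, Ck 1 (Da i))) as [DP HDP].
  { intro a. destruct (HP a) as [_ [D [H1 H2]]]. exists D; split; [intros i y; apply H1|exact H2]. }
  destruct (functional_choice (fun a (Ea : Fin.t N -> Fin.t N -> pt N -> R) =>
     forall i, (forall k, d1 (DP a i) k (Ea i k)) /\ forall k, cont (Ea i k))) as [EP HEP].
  { intro a. apply (functional_choice (fun i (Ei : Fin.t N -> pt N -> R) =>
      (forall k, d1 (DP a i) k (Ei k)) /\ forall k, cont (Ei k))).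
    intro i. destruct (proj2 (HDP a) i) as [_ [E [H1 H2]]]. exists E; split.
    - intros k y; apply H1.
    - intro k; apply (H2 k). }
  exists DP, EP. repeat split.
  - intro a; apply (Ck_cont 2), HP.
  - intros; apply HDP.
  - intros a i; apply (Ck_cont 1), HDP.
  - intros; apply HEP.
  - intros; apply HEP.
Qed.

Lemma jacobian_left_inverse {N} (F G : pt N -> pt N) DF DG :
  (forall x, G (F x) = x) ->
  (forall a i, d1 (fun x => F x a) i (DF a i)) ->
  (forall k a, d1 (fun y => G y k) a (DG k a)) -> (forall k a, cont (DG k a)) ->
  forall x k i, finsum N (fun a => DG k a (F x) * DF a i x) = dlt k i.
Proof.
  intros GF dF dG DGc x k i.
  pose proof (chain_rule (fun y => G y k) (DG k) (fun t => F (upd x i t))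
                (fun a => DF a i x) (x i) (dG k) (DGc k) (fun a => dF a i x)) as C.
  cbv beta in C; rewrite upd_same in C.
  rewrite dlt_sym. apply (uniqueness_limite (fun t => G (F (upd x i t)) k) (x i)); [exact C|].
  apply (dpl_ext (fun s => upd x i s k)); [intro s; rewrite GF; auto|exact (ld_proj k i x)].
Qed.

Lemma smooth_of_flat_jacobian {N} (F : pt N -> pt N) DF :
  (forall a, cont (fun x => F x a)) -> (forall a i, d1 (fun x => F x a) i (DF a i)) ->
  (forall a i, cont (DF a i)) -> (forall a i k, d1 (DF a i) k (fun _ => 0)) ->
  smooth_map F.
Proof.
  intros Fc dF DFc flat k a. destruct k; split; auto.
  exists (DF a); split; [intros i x; apply dF|].
  intro i; apply Ck_of_flat; auto.
Qed.

Definition minkowski (n : nat) (i : Fin.t (n + 1)) : R :=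
  if Fin.eq_dec i (tim n) then -1 else 1.

Lemma minkowski_sq n i : minkowski n i * minkowski n i = 1.
Proof. unfold minkowski; destruct (Fin.eq_dec i (tim n)); ring. Qed.

Lemma minkowski_tim n : minkowski n (tim n) = -1.
Proof. unfold minkowski; destruct (Fin.eq_dec (tim n) (tim n)); congruence. Qed.

Lemma finsum_split n g : finsum (n + 1) g = finsum n (fun j => g (spc j)) + g (tim n).
Proof.
  revert g; induction n; intro g.
  - simpl; unfold tim; simpl; ring.
  - change (g Fin.F1 + finsum (n + 1) (fun j => g (Fin.FS j))
            = finsum (S n) (fun j => g (spc j)) + g (tim (S n))).
    rewrite (IHn (fun j => g (Fin.FS j))). simpl; unfold spc, tim; simpl; ring.
Qed.

Lemma spc_tim n (j : Fin.t n) : spc j <> tim n.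
Proof.
  intro H. apply (f_equal (fun p => proj1_sig (Fin.to_nat p))) in H.
  unfold spc, tim in H; rewrite Fin.L_sanity, Fin.R_sanity in H; simpl in H.
  revert H; destruct (Fin.to_nat j) as [k Hk]; simpl; intro; lia.
Qed.

Lemma wave_sum n (v : Fin.t (n + 1) -> R) :
  finsum n (fun j => v (spc j)) - v (tim n) = finsum (n + 1) (fun i => minkowski n i * v i).
Proof.
  rewrite finsum_split, minkowski_tim.
  rewrite (finsum_ext _ (fun j => minkowski n (spc j) * v (spc j)) (fun j => v (spc j))); [ring|].
  intro j; unfold minkowski.
  destruct (Fin.eq_dec (spc j) (tim n)); [exfalso; eapply spc_tim; eauto|ring].
Qed.

Lemma wave_at_iff n (f : pt (n + 1) -> R) D V x :
  (forall i, d1 f i (D i)) -> (forall i, ld (D i) i x (V i)) ->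
  wave_at f x <-> finsum (n + 1) (fun i => minkowski n i * V i) = 0.
Proof.
  intros Hf HD; split.
  - intros [v [Hv Hs]]. rewrite wave_sum in Hs. rewrite <- Hs.
    apply finsum_ext; intro i. f_equal.
    destruct (Hv i) as [D0 [H0 H1]].
    apply (ld_unique (D i) i x); [apply HD|].
    apply (ld_ext D0); [|exact H1].
    intro y; apply (ld_unique f i y); [apply H0|apply Hf].
  - intro Hs. exists V; split; [|rewrite wave_sum; exact Hs].
    intro i; exists (D i); split; [apply Hf|apply HD].
Qed.


Section QuadraticPolynomials.
Variables (N : nat) (al be ga : R) (a0 a b d e : Fin.t N).

Definition quad (u : Fin.t N -> R) : R :=
  al * u a0 + (be * (u a * u b) + ga * (u d * u e)).

Definition quad_d1 (u du : Fin.t N -> R) : R :=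
  al * du a0 + (be * (du a * u b + u a * du b) + ga * (du d * u e + u d * du e)).

Definition quad_d2 (u du ddu : Fin.t N -> R) : R :=
  al * ddu a0 + (be * (ddu a * u b + 2 * (du a * du b) + u a * ddu b)
                 + ga * (ddu d * u e + 2 * (du d * du e) + u d * ddu e)).

Lemma quad_first (u Du : Fin.t N -> pt N -> R) i :
  (forall c, d1 (u c) i (Du c)) ->
  d1 (fun y => quad (fun c => u c y)) i (fun y => quad_d1 (fun c => u c y) (fun c => Du c y)).
Proof.
  intros Hu y. unfold quad, quad_d1.
  eapply ld_val; [apply ld_plus; [apply ld_scal, Hu|];
                  apply ld_plus; apply ld_scal, ld_mult; apply Hu|ring].
Qed.

Lemma quad_second (u Du : Fin.t N -> pt N -> R) (Eu : Fin.t N -> R) i x :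
  (forall c, d1 (u c) i (Du c)) -> (forall c, ld (Du c) i x (Eu c)) ->
  ld (fun y => quad_d1 (fun c => u c y) (fun c => Du c y)) i x
     (quad_d2 (fun c => u c x) (fun c => Du c x) Eu).
Proof.
  intros Hu HDu. unfold quad_d1, quad_d2.
  eapply ld_val; [apply ld_plus; [apply ld_scal, HDu|];
                  apply ld_plus; apply ld_scal, ld_plus; apply ld_mult;
                  first [apply HDu | apply Hu]|ring].
Qed.

End QuadraticPolynomials.

Arguments quad {N}.
Arguments quad_d1 {N}.
Arguments quad_d2 {N}.

Section WavePreservingMaps.
Variables (n : nat) (F G : pt (n + 1) -> pt (n + 1)).
Variables (DF DG : Fin.t (n + 1) -> Fin.t (n + 1) -> pt (n + 1) -> R)
          (EF : Fin.t (n + 1) -> Fin.t (n + 1) -> Fin.t (n + 1) -> pt (n + 1) -> R).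
Hypothesis G_F : forall x, G (F x) = x.
Hypothesis F_G : forall y, F (G y) = y.
Hypothesis F_C2 : forall a, Ck 2 (fun x => F x a).
Hypothesis DF_spec : forall a i, d1 (fun x => F x a) i (DF a i).
Hypothesis DF_cont : forall a i, cont (DF a i).
Hypothesis EF_spec : forall a i k, d1 (DF a i) k (EF a i k).
Hypothesis EF_cont : forall a i k, cont (EF a i k).
Hypothesis DG_spec : forall k a, d1 (fun y => G y k) a (DG k a).
Hypothesis DG_cont : forall k a, cont (DG k a).
(* Only this direction of the hypothesis of the theorem is needed: solutions
   in the y-coordinates are solutions in the x-coordinates. *)
Hypothesis wave_pullback : forall phi : pt (n + 1) -> R, Ck 2 phi ->
  (forall y, wave_at (fun y' => phi (G y')) y) -> forall x, wave_at phi x.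

Definition box (a : Fin.t (n + 1)) (x : pt (n + 1)) : R :=
  finsum (n + 1) (fun i => minkowski n i * EF a i i x).

Definition gram (a b : Fin.t (n + 1)) (x : pt (n + 1)) : R :=
  finsum (n + 1) (fun i => minkowski n i * (DF a i x * DF b i x)).

(* A test polynomial q with wave operator 0 gives the solution q o F. *)
Lemma quadratic_test al be ga a0 a b d e :
  be * minkowski n a * dlt a b + ga * minkowski n d * dlt d e = 0 -> forall x,
  finsum (n + 1) (fun i => minkowski n i *
    quad_d2 al be ga a0 a b d e (fun c => F x c) (fun c => DF c i x) (fun c => EF c i i x)) = 0.
Proof.
  intros Hsign x.
  set (phi := fun x => quad al be ga a0 a b d e (fun c => F x c)).
  assert (Hphi : Ck 2 phi).
  { unfold phi, quad. apply Ck_plus; [apply Ck_scal; auto|].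
    apply Ck_plus; apply Ck_scal, Ck_mult; auto. }
  assert (Hpoly : forall y, wave_at (fun y' => phi (G y')) y).
  { intro y. replace (fun y' => phi (G y')) with (fun y' => quad al be ga a0 a b d e (fun c => y' c))
      by (apply functional_extensionality; intro y'; unfold phi; rewrite F_G; auto).
    apply (wave_at_iff n _
             (fun i y' => quad_d1 al be ga a0 a b d e (fun c => y' c) (fun c => dlt i c))
             (fun i => quad_d2 al be ga a0 a b d e (fun c => y c)
                                         (fun c => dlt i c) (fun _ => 0))).
    - intro i; apply (quad_first _ _ _ _ _ _ _ _ _ (fun c y => y c) (fun c _ => dlt i c)).
      intros c y'; apply ld_proj.
    - intro i; apply (quad_second _ _ _ _ _ _ _ _ _ (fun c y => y c) (fun c _ => dlt i c)).
      + intros c y'; apply ld_proj.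
      + intro c; apply ld_const.
    - unfold quad_d2.
      rewrite (finsum_ext _ _ (fun i => dlt i a * (2 * be * (minkowski n i * dlt i b))
                                       + dlt i d * (2 * ga * (minkowski n i * dlt i e))))
        by (intro; ring).
      rewrite finsum_plus, !finsum_dlt. nra. }
  refine (proj1 (wave_at_iff n phi
            (fun i y => quad_d1 al be ga a0 a b d e (fun c => F y c) (fun c => DF c i y))
            (fun i => quad_d2 al be ga a0 a b d e (fun c => F x c) (fun c => DF c i x)
                              (fun c => EF c i i x)) x _ _) _).
  - intro i; apply (quad_first _ _ _ _ _ _ _ _ _ (fun c y => F y c)); auto.
  - intro i; apply quad_second; [auto|intro c; apply EF_spec].
  - exact (wave_pullback phi Hphi Hpoly x).
Qed.

Lemma quadratic_test_expanded al be ga a0 a b d e :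
  be * minkowski n a * dlt a b + ga * minkowski n d * dlt d e = 0 -> forall x,
  al * box a0 x + be * (box a x * F x b + 2 * gram a b x + F x a * box b x)
  + ga * (box d x * F x e + 2 * gram d e x + F x d * box e x) = 0.
Proof.
  intros Hsign x. pose proof (quadratic_test al be ga a0 a b d e Hsign x) as T.
  unfold quad_d2 in T.
  rewrite (finsum_ext _ _ (fun i =>
    al * (minkowski n i * EF a0 i i x)
    + (be * (F x b * (minkowski n i * EF a i i x)
             + (2 * (minkowski n i * (DF a i x * DF b i x))
                + F x a * (minkowski n i * EF b i i x)))
       + ga * (F x e * (minkowski n i * EF d i i x)
               + (2 * (minkowski n i * (DF d i x * DF e i x))
                  + F x d * (minkowski n i * EF e i i x)))))) in T by (intro; ring).
  repeat (rewrite finsum_plus in T || rewrite finsum_scal in T).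
  unfold box, gram; rewrite <- T; ring.
Qed.

(* Testing with y_a: each component F^a solves the wave equation. *)
Lemma components_harmonic a x : box a x = 0.
Proof.
  pose proof (quadratic_test_expanded 1 0 0 a a a a a ltac:(ring) x). lra.
Qed.

(* Testing with y_a y_b and y_a^2 + eta_a y_(n+1)^2: DF is conformal. *)
Lemma gram_conformal a b x :
  gram a b x = - gram (tim n) (tim n) x * minkowski n a * dlt a b.
Proof.
  destruct (Fin.eq_dec a b) as [<-|Hab].
  - assert (Hsign : 1 * minkowski n a * dlt a a
                    + minkowski n a * minkowski n (tim n) * dlt (tim n) (tim n) = 0)
      by (rewrite !dlt_eq, minkowski_tim; ring).
    pose proof (quadratic_test_expanded 0 1 (minkowski n a) a a a (tim n) (tim n) Hsign x) as E.
    rewrite !components_harmonic in E. rewrite dlt_eq. nra.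
  - assert (Hsign : 1 * minkowski n a * dlt a b + 0 * minkowski n a * dlt a a = 0)
      by (rewrite dlt_neq by auto; ring).
    pose proof (quadratic_test_expanded 0 1 0 a a b a a Hsign x) as E.
    rewrite !components_harmonic in E. rewrite dlt_neq by auto. lra.
Qed.

(* The rigidity theorem applies: DF is conformal with factor
   mu = -gram_(n+1)(n+1), the components are harmonic, DG o F inverts DF on
   both sides by the chain rule, and D^2 F is symmetric by Schwarz. *)
Lemma second_derivatives_vanish : (2 <= n)%nat -> forall a i k x, EF a i k x = 0.
Proof.
  intro hn.
  assert (Hdim : 3 <= INR (n + 1)) by (rewrite plus_INR; apply le_INR in hn; simpl in *; lra).
  assert (Hsym : forall a i k x, EF a i k x = EF a k i x).
  { intros a i k x. destruct (Fin.eq_dec i k) as [<-|Hik]; auto.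
    apply (schwarz (fun x => F x a) i k (DF a i) (DF a k)); auto. }
  assert (K_right : forall x a j, finsum (n + 1) (fun b => DF a b x * DG b j (F x)) = dlt a j).
  { intros x a j.
    pose proof (jacobian_left_inverse G F DG DF F_G DG_spec DF_spec DF_cont (F x) a j) as E.
    rewrite G_F in E; exact E. }
  apply (conformal_harmonic_affine (n + 1) (minkowski n) (fun x => - gram (tim n) (tim n) x)
           DF EF (fun x k a => DG k a (F x))); auto.
  - apply minkowski_sq.
  - apply (jacobian_left_inverse F G DF DG); auto.
  - intros x a; apply components_harmonic.
  - intros x a b; apply gram_conformal.
Qed.

End WavePreservingMaps.

Theorem corollary2p4 (n : nat) (hn : (2 <= n)%nat)
  (F G : pt (n + 1) -> pt (n + 1)) :
  C2_diffeo F G ->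
  (forall phi : pt (n + 1) -> R, Ck 2 phi ->
     ((forall x, wave_at phi x) <-> (forall y, wave_at (fun y' => phi (G y')) y))) ->
  smooth_map F.
Proof.
  intros [G_F [F_G [F_C2 G_C2]]] Hwave.
  destruct (C2_map_derivatives F F_C2) as [DF [EF [Fc [dF [DFc [dDF EFc]]]]]].
  destruct (C2_map_derivatives G G_C2) as [DG [EG [_ [dG [DGc _]]]]].
  apply (smooth_of_flat_jacobian F DF); auto.
  intros a i k y.
  pose proof (second_derivatives_vanish n F G DF DG EF G_F F_G F_C2 dF DFc dDF EFc dG DGc
                (fun phi Hphi => proj2 (Hwave phi Hphi)) hn a i k) as Hzero.
  apply (ld_val _ _ _ (EF a i k y)); [apply dDF|apply Hzero].
Qed.
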